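(* $u_2u_1u_2\subset U$.
   Context: Let $B_3=\langle s_1,s_2\mid s_1s_2s_1=s_2s_1s_2\rangle$, $R_4=\mathbb{Z}[a,b,c,d,d^{-1}]$, and let $H_4$ be the quotient of the group algebra $R_4B_3$ by the relations $s_i^4=as_i^3+bs_i^2+cs_i+d$ for $i=1,2$; identify $s_i$ with their images in $H_4$. For $i=1,2$ let $u_i$ be the $R_4$-subalgebra of $H_4$ generated by $s_i$. For $R_4$-submodules (or elements) $X_1,\dots,X_n$ of $H_4$, $X_1\cdots X_n$ denotes the $R_4$-submodule spanned by all products $x_1\cdots x_n$ with $x_j\in X_j$, and sums are sums of submodules. Define $U'=u_1u_2u_1+u_1s_2s_1^{-1}s_2u_1+u_1s_2^{-1}s_1s_2^{-1}u_1+u_1s_2^{-1}s_1^{-2}s_2^{-1}$ and $U=U'+u_1s_2s_1^{-2}s_2u_1+u_1s_2^{-2}s_1^{-2}s_2^{-2}u_1$. *)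

From mathcomp Require Import all_boot all_order all_algebra.
Set Implicit Arguments. Unset Strict Implicit. Unset Printing Implicit Defensive.
Import GRing.Theory.
Local Open Scope ring_scope.

Section Hecke.
Variables (R : comNzRingType) (A : unitAlgType R).

Definition in_span (S : A -> Prop) (x : A) : Prop :=
  exists (n : nat) (r : 'I_n -> R) (v : 'I_n -> A),
    (forall i, S (v i)) /\ x = \sum_(i < n) r i *: v i.

Definition subalg1 (s : A) : A -> Prop :=
  fun x => exists p : {poly R}, x = horner_alg s p.

(* generators of u_1 u_2 u_1, u_1 g u_1, u_1 g, u_2 u_1 u_2 *)
Definition prod3 (X Y Z : A -> Prop) : A -> Prop :=
  fun w => exists x y z, [/\ X x, Y y, Z z & w = x * y * z].
Definition sandwich (X : A -> Prop) (g : A) (Z : A -> Prop) : A -> Prop :=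
  fun w => exists x z, [/\ X x, Z z & w = x * g * z].
Definition left_mul (X : A -> Prop) (g : A) : A -> Prop :=
  fun w => exists x, X x /\ w = x * g.

(* generating set of U (sum of the six submodules in the definition of U) *)
Definition U_gens (s1 s2 : A) : A -> Prop :=
  let u1 := subalg1 s1 in let u2 := subalg1 s2 in
  fun w =>
    prod3 u1 u2 u1 w
    \/ sandwich u1 (s2 * s1^-1 * s2) u1 w
    \/ sandwich u1 (s2^-1 * s1 * s2^-1) u1 w
    \/ left_mul u1 (s2^-1 * s1^-2 * s2^-1) w
    \/ sandwich u1 (s2 * s1^-2 * s2) u1 w
    \/ sandwich u1 (s2^-2 * s1^-2 * s2^-2) u1 w.

Definition U_mod (s1 s2 : A) : A -> Prop := in_span (U_gens s1 s2).

Definition u2u1u2 (s1 s2 : A) : A -> Prop :=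
  in_span (prod3 (subalg1 s2) (subalg1 s1) (subalg1 s2)).
End Hecke.

From mathcomp Require Import all_boot all_order all_algebra.
From mathcomp Require Import zify.
Import GRing.Theory Num.Theory.
Local Open Scope ring_scope.

(* Since [d] is invertible, the quartic relation expresses [s ^ (m + 4)] and
   [s ^ (m - 1)] through [s ^ m], ..., [s ^ (m + 3)], so four consecutive integer
   powers of a generator span all of them.  Hence [u2 u1 u2] is spanned by the
   words [s2 ^ i * s1 ^ j * s2 ^ k], and it suffices to place in [U] the words
   with [j] in {-2, -1, 0, 1} and [i], [k] in windows of four consecutive
   exponents.  The braid identities for conjugating a power of one generator by
   the other turn each of these finitely many words into a generator of [U], or
   into a power of [s1] times a word already placed in [U]. *)

Section Span.
Context {R : comNzRingType} {A : unitAlgType R}.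

Definition lincomb_closed (P : A -> Prop) :=
  [/\ P 0, forall u v, P u -> P v -> P (u + v) & forall (k : R) u, P u -> P (k *: u)].

Lemma in_span_sub {S : A -> Prop} x : S x -> in_span S x.
Proof.
move=> Sx; exists 1%N, (fun _ => 1), (fun _ => x); split=> //.
by rewrite big_ord1 scale1r.
Qed.

Lemma in_span_closed (S : A -> Prop) : lincomb_closed (in_span S).
Proof.
split.
- by exists 0%N, (fun _ => 0), (fun _ => 0); split; [case | rewrite big_ord0].
- move=> _ _ [n [r [f [Sf ->]]]] [m [r' [f' [Sf' ->]]]].
  exists (n + m)%N, (fun i => match split i with inl j => r j | inr j => r' j end),
    (fun i => match split i with inl j => f j | inr j => f' j end); split.
    by move=> i; case: (split i).
  rewrite big_split_ord /=; congr (_ + _); apply: eq_bigr => i _.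
    by rewrite (unsplitK (inl _ i)).
  by rewrite (unsplitK (inr _ i)).
- move=> k _ [n [r [f [Sf ->]]]]; exists n, (fun i => k * r i), f; split=> //.
  by rewrite scaler_sumr; apply: eq_bigr => i _; rewrite scalerA.
Qed.

Lemma in_span_ind {S : A -> Prop} (P : A -> Prop) :
  lincomb_closed P -> (forall x, S x -> P x) -> forall w, in_span S w -> P w.
Proof.
case=> P0 PD PZ SP _ [n [r [f [Sf ->]]]].
by elim/big_ind: _ => // i _; apply: PZ; apply: SP.
Qed.

Lemma in_span_mono (S T : A -> Prop) : (forall x, S x -> T x) ->
  forall w, in_span S w -> in_span T w.
Proof.
move=> ST; apply: (in_span_ind (in_span T)); first exact: in_span_closed.
by move=> x /ST; apply: in_span_sub.
Qed.

Lemma in_span_mul2 (S T : A -> Prop) p q :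
  (forall x, S x -> in_span T (p * x * q)) ->
  forall w, in_span S w -> in_span T (p * w * q).
Proof.
have [T0 TD TZ] := in_span_closed T; move=> ST.
apply: (in_span_ind (fun w => in_span T (p * w * q))) => //; split.
- by rewrite mulr0 mul0r.
- by move=> u v Tu Tv; rewrite mulrDr mulrDl; apply: TD.
- by move=> k u Tu; rewrite -scalerAr -scalerAl; apply: TZ.
Qed.

End Span.

Section Subalgebra.
Context {R : comNzRingType} {A : unitAlgType R} {t : A}.

Lemma subalg1_closed : lincomb_closed (subalg1 t).
Proof.
split.
- by exists 0; rewrite rmorph0.
- by move=> _ _ [f ->] [g ->]; exists (f + g); rewrite rmorphD.
- move=> k _ [f ->]; exists (k *: f).
  by rewrite -mul_polyC rmorphM /= horner_algC mulr_algl.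
Qed.

Lemma subalg1X n : subalg1 t (t ^+ n).
Proof. by exists ('X ^+ n); rewrite rmorphXn /= horner_algX. Qed.

Lemma subalg1M u v : subalg1 t u -> subalg1 t v -> subalg1 t (u * v).
Proof. by move=> [f ->] [g ->]; exists (f * g); rewrite rmorphM. Qed.

Lemma lincomb_closed_horner_alg {P : A -> Prop} {f : {poly R}} {p q : A} :
  lincomb_closed P -> (forall n, P (p * t ^+ n * q)) -> P (p * horner_alg t f * q).
Proof.
case=> P0 PD PZ; elim/poly_ind: f p q => [|f k IHf] p q Pt.
  by rewrite rmorph0 mulr0 mul0r.
rewrite rmorphD rmorphM /= horner_algX horner_algC mulrDr mulrDl; apply: PD.
  rewrite mulrA -(mulrA _ t); apply: IHf => n.
  by rewrite mulrA -(mulrA _ _ t) -exprSr.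
by rewrite -scalerAr -scalerAl mulr1; apply: PZ; have := Pt 0%N; rewrite mulr1.
Qed.

End Subalgebra.

Section QuarticPowers.
Context {R : comNzRingType} {A : unitAlgType R} {a b c d e : R} {s : A}.
Hypotheses (de : d * e = 1) (s_unit : s \is a GRing.unit)
  (s_quartic : s ^+ 4 = a *: s ^+ 3 + b *: s ^+ 2 + c *: s + d%:A).

Lemma exprz_add4 z :
  s ^ (z + 4) = a *: s ^ (z + 3) + b *: s ^ (z + 2) + c *: s ^ (z + 1) + d *: s ^ z.
Proof.
have s4 : s ^ 4 = a *: s ^ 3 + b *: s ^ 2 + c *: s ^ 1 + d *: s ^ 0 by exact: s_quartic.
by rewrite exprzDr // s4 !mulrDr -!scalerAr -!exprzDr // addr0.
Qed.

Lemma exprz_sub1 z : s ^ (z - 1) =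
  e *: s ^ (z + 3) + (- (e * a)) *: s ^ (z + 2) + (- (e * b)) *: s ^ (z + 1)
  + (- (e * c)) *: s ^ z.
Proof.
have := exprz_add4 (z - 1).
have -> : z - 1 + 4 = z + 3 by lia.
have -> : z - 1 + 3 = z + 2 by lia.
have -> : z - 1 + 2 = z + 1 by lia.
rewrite subrK => ->.
rewrite !scalerDr !scalerA [e * d]mulrC de scale1r !scaleNr.
by rewrite -!addrA -!opprD !addrA [_ + s ^ (z - 1)]addrC addrK.
Qed.

Lemma exprz_window (m0 m1 m2 m3 : int) {P : A -> Prop} {p q : A} : lincomb_closed P ->
  m1 = m0 + 1 -> m2 = m0 + 2 -> m3 = m0 + 3 ->
  P (p * s ^ m0 * q) -> P (p * s ^ m1 * q) ->
  P (p * s ^ m2 * q) -> P (p * s ^ m3 * q) ->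
  forall z, P (p * s ^ z * q).
Proof.
move=> [P0 PD PZ] -> -> -> H0 H1 H2 H3.
pose Q z := [/\ P (p * s ^ z * q), P (p * s ^ (z + 1) * q),
                P (p * s ^ (z + 2) * q) & P (p * s ^ (z + 3) * q)].
have lin4 u1 u2 u3 u4 k1 k2 k3 k4 : P (p * u1 * q) -> P (p * u2 * q) ->
    P (p * u3 * q) -> P (p * u4 * q) ->
    P (p * (k1 *: u1 + k2 *: u2 + k3 *: u3 + k4 *: u4) * q).
  move=> P1 P2 P3 P4; rewrite !mulrDr !mulrDl -!scalerAr -!scalerAl.
  by do ![apply: (PD) | apply: (PZ)].
have Q_succ z : Q z -> Q (z + 1).
  case=> Q0 Q1 Q2 Q3; rewrite /Q -!addrA; split=> //.
  by rewrite (_ : 1 + 3 = 4) // exprz_add4; apply: lin4.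
have Q_pred z : Q z -> Q (z - 1).
  case=> Q0 Q1 Q2 Q3; rewrite /Q -!addrA; split.
  - by rewrite exprz_sub1; apply: lin4.
  - by rewrite addNr addr0.
  - by rewrite (_ : -1 + 2 = 1).
  - by rewrite (_ : -1 + 3 = 2).
have Q_all z : Q z.
  have [m0z|zm0] := lerP m0 z.
    have -> : z = m0 + `|z - m0|%N by lia.
    elim: `|z - m0|%N => [|n IHn]; first by rewrite addr0.
    by rewrite -addn1 PoszD addrA; apply: Q_succ.
  have -> : z = m0 - (`|z - m0|%N)%:Z by lia.
  elim: `|z - m0|%N => [|n IHn]; first by rewrite subr0.
  by rewrite -addn1 PoszD opprD addrA; apply: Q_pred.
by move=> z; case: (Q_all z).
Qed.

Lemma subalg1_exprz z : subalg1 s (s ^ z).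
Proof.
rewrite -[s ^ z]mul1r -[_ * _]mulr1; move: z.
by apply: (exprz_window 0 1 2 3 subalg1_closed) => //;
  rewrite mulr1 mul1r; apply: subalg1X.
Qed.

End QuarticPowers.

Section UnitRingWords.
Context {A : unitRingType}.

Lemma exprz2 (t : A) : t ^ 2 = t * t. Proof. by []. Qed.
Lemma exprVn2 (t : A) : t ^- 2 = t^-1 * t^-1. Proof. by rewrite -exprVn. Qed.
Lemma exprzN2 (t : A) : t ^ (-2) = t^-1 * t^-1. Proof. exact: exprVn2. Qed.

Lemma mulr3_lcongr {a b c r w : A} : a * b * c = r -> w * a * b * c = w * r.
Proof. by move=> <-; rewrite !mulrA. Qed.

Lemma mulr4_lcongr {a b c d r w : A} : a * b * c * d = r -> w * a * b * c * d = w * r.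
Proof. by move=> <-; rewrite !mulrA. Qed.

Definition exprz_smallE := (expr0z, expr1z, exprN1, exprz2, exprzN2, exprVn2).

End UnitRingWords.

Section Conjugation.
Context {A : unitRingType}.

Lemma conj_exprn (g u : A) n : g \is a GRing.unit ->
  g * u ^+ n * g^-1 = (g * u * g^-1) ^+ n.
Proof.
move=> g_unit; elim: n => [|n IHn]; first by rewrite !expr0 mulr1 mulrV.
by rewrite !exprSr -IHn !mulrA mulrVK.
Qed.

Lemma conj_exprz (g u : A) z : g \is a GRing.unit -> u \is a GRing.unit ->
  g * u ^ z * g^-1 = (g * u * g^-1) ^ z.
Proof.
move=> g_unit u_unit; case: z => n; first by rewrite -!exprnP conj_exprn.
rewrite /exprz -conj_exprn // invrM ?unitrV ?invrK //; last first.
  by rewrite unitrMl ?unitrX.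
by rewrite invrM ?unitrX // mulrA.
Qed.

End Conjugation.

Section Braid.
Context {A : unitRingType} {x y : A}.
Hypotheses (x_unit : x \is a GRing.unit) (y_unit : y \is a GRing.unit)
  (braid : x * y * x = y * x * y).

Lemma braid_conjV : y^-1 * x * y = x * y * x^-1.
Proof.
apply: (mulIr x_unit); apply: (mulrI y_unit).
by rewrite !mulrA mulrV // mul1r mulrVK // braid.
Qed.

Lemma braid_conjV_exprz z : y^-1 * x ^ z * y = x * y ^ z * x^-1.
Proof.
have yV_unit : y^-1 \is a GRing.unit by rewrite unitrV.
have := conj_exprz (y^-1) x z yV_unit x_unit; rewrite invrK braid_conjV => ->.
by rewrite -conj_exprz.
Qed.

Lemma braid_mul_exprz z : x * y * x ^ z = y ^ z * x * y.
Proof.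
have xy_unit : x * y \is a GRing.unit by rewrite unitrMr.
have conj_xy : x * y * x * (x * y)^-1 = y.
  by apply: (mulIr xy_unit); rewrite mulrVK // mulrA braid.
have := conj_exprz (x * y) x z xy_unit x_unit; rewrite conj_xy => <-.
by rewrite -[RHS]mulrA mulrVK.
Qed.

End Braid.

Lemma braid_exprz_mulV {A : unitRingType} {x y : A} :
  x \is a GRing.unit -> y \is a GRing.unit -> x * y * x = y * x * y ->
  forall z, y ^ z * x^-1 * y^-1 = x^-1 * y^-1 * x ^ z.
Proof.
move=> x_unit y_unit braid z.
have := congr1 GRing.inv (braid_mul_exprz y_unit x_unit (esym braid) (- z)).
by rewrite !invrM ?unitrMr ?unitrXz // !mulrA !invr_expz opprK.
Qed.

Section Proposition.
Context {R : comNzRingType} {A : unitAlgType R} {a b c d e : R} {s1 s2 : A}.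
Hypotheses (de : d * e = 1)
  (s1_unit : s1 \is a GRing.unit) (s2_unit : s2 \is a GRing.unit)
  (braid : s1 * s2 * s1 = s2 * s1 * s2)
  (s1_quartic : s1 ^+ 4 = a *: s1 ^+ 3 + b *: s1 ^+ 2 + c *: s1 + d%:A)
  (s2_quartic : s2 ^+ 4 = a *: s2 ^+ 3 + b *: s2 ^+ 2 + c *: s2 + d%:A).

Local Notation U := (U_mod s1 s2).

(* The summands of [U] other than [u1 s2^-1 s1^-2 s2^-1], written as
   [u1 g u1]; unlike [U], their span is stable under right multiplication
   by [u1]. *)
Definition U_bimod_words : seq A :=
  [:: s2 * s1^-1 * s2; s2^-1 * s1 * s2^-1; s2 * s1^-2 * s2; s2^-2 * s1^-2 * s2^-2].

Definition U_bimod_mid (g : A) : Prop := subalg1 s2 g \/ g \in U_bimod_words.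

Definition U_bimod : A -> Prop :=
  in_span (fun w => exists2 g, U_bimod_mid g & sandwich (subalg1 s1) g (subalg1 s1) w).

Lemma U_closed : lincomb_closed U. Proof. exact: in_span_closed. Qed.
Lemma U_bimod_closed : lincomb_closed U_bimod. Proof. exact: in_span_closed. Qed.

Lemma u1_exprz z : subalg1 s1 (s1 ^ z).
Proof. exact: subalg1_exprz de s1_unit s1_quartic z. Qed.

Lemma u2_exprz z : subalg1 s2 (s2 ^ z).
Proof. exact: subalg1_exprz de s2_unit s2_quartic z. Qed.

Lemma U_bimod_sub w : U_bimod w -> U w.
Proof.
apply: in_span_mono => _ [g [u2g|mid_g] [p [r [u1p u1r ->]]]]; rewrite /U_gens.
  by left; exists p, g, r.
move: mid_g; rewrite /U_bimod_words !inE => /or4P[] /eqP ->.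
- by right; left; exists p, r.
- by right; right; left; exists p, r.
- by right; right; right; right; left; exists p, r.
- by right; right; right; right; right; exists p, r.
Qed.

Lemma U_bimod_sandwich g p r : U_bimod_mid g ->
  subalg1 s1 p -> subalg1 s1 r -> U_bimod (p * g * r).
Proof. by move=> mid_g u1p u1r; apply: in_span_sub; exists g => //; exists p, r. Qed.

Lemma U_bimod_mul2 p q w : subalg1 s1 p -> subalg1 s1 q -> U_bimod w -> U_bimod (p * w * q).
Proof.
move=> u1p u1q; apply: in_span_mul2 => _ [g mid_g [x [z [u1x u1z ->]]]].
have -> : p * (x * g * z) * q = (p * x) * g * (z * q) by rewrite !mulrA.
by apply: U_bimod_sandwich => //; apply: subalg1M.
Qed.

Lemma U_mull p w : subalg1 s1 p -> U w -> U (p * w).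
Proof.
move=> u1p Uw; rewrite -[p * w]mulr1; move: w Uw; apply: in_span_mul2 => w.
have bimod g x z : U_bimod_mid g -> subalg1 s1 x -> subalg1 s1 z ->
    U (p * (x * g * z) * 1).
  move=> mid_g u1x u1z; apply: U_bimod_sub; apply: U_bimod_mul2 => //.
    exact: (u1_exprz 0).
  exact: U_bimod_sandwich.
case=> [[x [g [z [u1x u2g u1z ->]]]] | [[x [z [u1x u1z ->]]] |
  [[x [z [u1x u1z ->]]] | [[x [u1x ->]] | [[x [z [u1x u1z ->]]] | [x [z [u1x u1z ->]]]]]]]].
- exact: bimod (or_introl u2g) u1x u1z.
- by apply: bimod u1x u1z; rewrite /U_bimod_mid /U_bimod_words !inE eqxx; right.
- by apply: bimod u1x u1z; rewrite /U_bimod_mid /U_bimod_words !inE eqxx orbT; right.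
- apply: in_span_sub; do 3 right; left; exists (p * x).
  by split; [apply: subalg1M | rewrite mulr1 mulrA].
- by apply: bimod u1x u1z; rewrite /U_bimod_mid /U_bimod_words !inE eqxx !orbT; right.
- by apply: bimod u1x u1z; rewrite /U_bimod_mid /U_bimod_words !inE eqxx !orbT; right.
Qed.

(* Instances of the braid identities: [12] for [x := s1, y := s2], [21] for
   the generators swapped; suffixes give the exponent of specialised ones. *)
Let conjV12 := braid_conjV s1_unit s2_unit braid.
Let conjV21 := braid_conjV s2_unit s1_unit (esym braid).
Let conj12 := braid_conjV_exprz s1_unit s2_unit braid.
Let conj21 := braid_conjV_exprz s2_unit s1_unit (esym braid).
Let shift12 := braid_mul_exprz s1_unit s2_unit braid.
Let shift21 := braid_mul_exprz s2_unit s1_unit (esym braid).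
Let shiftV12 := braid_exprz_mulV s1_unit s2_unit braid.
Let shiftV21 := braid_exprz_mulV s2_unit s1_unit (esym braid).

Let braidV : s1^-1 * s2^-1 * s1^-1 = s2^-1 * s1^-1 * s2^-1 := shiftV21 (-1).
Let conj12_N1 : s2^-1 * s1^-1 * s2 = s1 * s2^-1 * s1^-1 := conj12 (-1).
Let shiftV12_1 : s2 * s1^-1 * s2^-1 = s1^-1 * s2^-1 * s1 := shiftV12 1.

Local Ltac normalize_words := rewrite ?exprz_smallE ?mul1r ?mulr1 ?mulrA.

Let shift21_2 : s2 * s1 * s2 * s2 = s1 * s1 * s2 * s1.
Proof. by have := shift21 2; normalize_words. Qed.

Let shiftV21_N2 : s1^-1 * s1^-1 * s2^-1 * s1^-1 = s2^-1 * s1^-1 * s2^-1 * s2^-1.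
Proof. by have := shiftV21 (-2); normalize_words. Qed.

Let conj12_N2 : s2^-1 * s1^-1 * s1^-1 * s2 = s1 * s2^-1 * s2^-1 * s1^-1.
Proof. by have := conj12 (-2); normalize_words. Qed.

Let conj21_N2 : s1^-1 * s2^-1 * s2^-1 * s1 = s2 * s1^-1 * s1^-1 * s2^-1.
Proof. by have := conj21 (-2); normalize_words. Qed.

Lemma U_bimod_u1u2u1 i j k w : w = s1 ^ i * s2 ^ j * s1 ^ k -> U_bimod w.
Proof.
by move=> ->; apply: U_bimod_sandwich; [left; apply: u2_exprz | apply: u1_exprz ..].
Qed.

Lemma U_bimod_word g i k w : g \in U_bimod_words -> w = s1 ^ i * g * s1 ^ k -> U_bimod w.
Proof. by move=> word_g ->; apply: U_bimod_sandwich; [right | apply: u1_exprz ..]. Qed.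

Lemma U_bimod_s2s1Vs2 i k w : w = s1 ^ i * (s2 * s1^-1 * s2) * s1 ^ k -> U_bimod w.
Proof. by apply: U_bimod_word; rewrite /U_bimod_words !inE eqxx. Qed.

Lemma U_bimod_s2Vs1s2V i k w : w = s1 ^ i * (s2^-1 * s1 * s2^-1) * s1 ^ k -> U_bimod w.
Proof. by apply: U_bimod_word; rewrite /U_bimod_words !inE eqxx orbT. Qed.

Lemma U_bimod_s2s1N2s2 i k w : w = s1 ^ i * (s2 * s1^-2 * s2) * s1 ^ k -> U_bimod w.
Proof. by apply: U_bimod_word; rewrite /U_bimod_words !inE eqxx !orbT. Qed.

Lemma U_bimod_s2N2s1N2s2N2 i k w :
  w = s1 ^ i * (s2^-2 * s1^-2 * s2^-2) * s1 ^ k -> U_bimod w.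
Proof. by apply: U_bimod_word; rewrite /U_bimod_words !inE eqxx !orbT. Qed.

Lemma U_s2Vs1N2s2V i w : w = s1 ^ i * (s2^-1 * s1^-2 * s2^-1) -> U w.
Proof.
by move=> ->; apply: in_span_sub; do 3 right; left; exists (s1 ^ i); split=> //;
  apply: u1_exprz.
Qed.

Lemma s2_window_left m0 m1 m2 m3 {P : A -> Prop} {u v : A} : lincomb_closed P ->
  m1 = m0 + 1 -> m2 = m0 + 2 -> m3 = m0 + 3 ->
  P (s2 ^ m0 * u * v) -> P (s2 ^ m1 * u * v) ->
  P (s2 ^ m2 * u * v) -> P (s2 ^ m3 * u * v) ->
  forall i, P (s2 ^ i * u * v).
Proof.
have E z : s2 ^ z * u * v = 1 * s2 ^ z * (u * v) by rewrite mul1r mulrA.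
move=> closedP E1 E2 E3 H0 H1 H2 H3 i; rewrite E.
by apply: (exprz_window de s2_unit s2_quartic m0 m1 m2 m3 closedP); rewrite // -E.
Qed.

Lemma s2_window_right m0 m1 m2 m3 {P : A -> Prop} {u v : A} : lincomb_closed P ->
  m1 = m0 + 1 -> m2 = m0 + 2 -> m3 = m0 + 3 ->
  P (u * v * s2 ^ m0) -> P (u * v * s2 ^ m1) ->
  P (u * v * s2 ^ m2) -> P (u * v * s2 ^ m3) ->
  forall k, P (u * v * s2 ^ k).
Proof.
have E z : u * v * s2 ^ z = (u * v) * s2 ^ z * 1 by rewrite mulr1.
move=> closedP E1 E2 E3 H0 H1 H2 H3 k; rewrite E.
by apply: (exprz_window de s2_unit s2_quartic m0 m1 m2 m3 closedP); rewrite // -E.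
Qed.

Lemma U_bimod_s2_s1_s2 i k : U_bimod (s2 ^ i * s1 * s2 ^ k).
Proof.
move: k; apply: (s2_window_right (-1) 0 1 2 U_bimod_closed) => //.
- move: i; apply: (s2_window_left (-1) 0 1 2 U_bimod_closed) => //.
  + by apply: (U_bimod_s2Vs1s2V 0 0); normalize_words.
  + by apply: (U_bimod_u1u2u1 1 (-1) 0); normalize_words.
  + by apply: (U_bimod_u1u2u1 (-1) 1 1); normalize_words; rewrite conjV21.
  + by apply: (U_bimod_s2s1Vs2 0 1); normalize_words; rewrite (mulr3_lcongr (esym conjV21)) !mulrA.
- by apply: (U_bimod_u1u2u1 0 i 1); normalize_words.
- by apply: (U_bimod_u1u2u1 1 1 i); normalize_words; rewrite shift12.
- move: i; apply: (s2_window_left (-2) (-1) 0 1 U_bimod_closed) => //.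
  + apply: (U_bimod_s2s1N2s2 1 0); normalize_words.
    by rewrite (mulr3_lcongr conjV12) !mulrA conjV12.
  + by apply: (U_bimod_s2s1Vs2 1 0); normalize_words; rewrite conjV12.
  + by apply: (U_bimod_u1u2u1 1 2 0); normalize_words.
  + by apply: (U_bimod_u1u2u1 2 1 1); normalize_words; rewrite shift21_2.
Qed.

Lemma U_s2_s1V_s2 i k : U (s2 ^ i * s1^-1 * s2 ^ k).
Proof.
move: k; apply: (s2_window_right (-2) (-1) 0 1 U_closed) => //.
- move: i; apply: (s2_window_left (-2) (-1) 0 1 U_closed) => //.
  + apply: (U_s2Vs1N2s2V (-1)); normalize_words.
    by rewrite (mulr3_lcongr (esym braidV)) !mulrA -braidV.
  + apply: U_bimod_sub; apply: (U_bimod_u1u2u1 (-2) (-1) (-1)).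
    by normalize_words; rewrite shiftV21_N2.
  + by apply: U_bimod_sub; apply: (U_bimod_u1u2u1 (-1) (-2) 0); normalize_words.
  + by apply: U_bimod_sub; apply: (U_bimod_s2Vs1s2V (-1) 0); normalize_words; rewrite shiftV12_1.
- by apply: U_bimod_sub; apply: (U_bimod_u1u2u1 (-1) (-1) i); normalize_words; rewrite shiftV12.
- by apply: U_bimod_sub; apply: (U_bimod_u1u2u1 0 i (-1)); normalize_words.
- move: i; apply: (s2_window_left (-2) (-1) 0 1 U_closed) => //.
  + apply: U_bimod_sub; apply: (U_bimod_s2Vs1s2V 0 (-1)); normalize_words.
    by rewrite (mulr3_lcongr conj12_N1) !mulrA.
  + by apply: U_bimod_sub; apply: (U_bimod_u1u2u1 1 (-1) (-1)); normalize_words; rewrite conj12_N1.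
  + by apply: U_bimod_sub; apply: (U_bimod_u1u2u1 (-1) 1 0); normalize_words.
  + by apply: U_bimod_sub; apply: (U_bimod_s2s1Vs2 0 0); normalize_words.
Qed.

Lemma U_s2_s1N2_s2 i k : U (s2 ^ i * s1^-2 * s2 ^ k).
Proof.
move: k; apply: (s2_window_right (-2) (-1) 0 1 U_closed) => //.
- move: i; apply: (s2_window_left (-2) (-1) 0 1 U_closed) => //.
  + by apply: U_bimod_sub; apply: (U_bimod_s2N2s1N2s2N2 0 0); normalize_words.
  + have -> : s2 ^ (-1) * s1^-2 * s2 ^ (-2) = s1 * (s2 ^ (-2) * s1^-1 * s2 ^ (-3)).
      have E : s2 ^ (-2) = s2 * s2 ^ (-3) by rewrite -[X in X * _]expr1z -exprzDr.
      by rewrite [in LHS]E !mulrA -conj12.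
    by apply: U_mull; [apply: u1_exprz 1 | apply: U_s2_s1V_s2].
  + by apply: U_bimod_sub; apply: (U_bimod_u1u2u1 (-2) (-2) 0); normalize_words.
  + have -> : s2 ^ 1 * s1^-2 * s2 ^ (-2) = s1^-1 * (s2 ^ (-2) * s1 * s2 ^ (-1)).
      by rewrite [in LHS]exprzN2 !mulrA conj21.
    by apply: U_mull; [apply: u1_exprz (-1) | apply: U_bimod_sub; apply: U_bimod_s2_s1_s2].
- move: i; apply: (s2_window_left (-1) 0 1 2 U_closed) => //.
  + by apply: (U_s2Vs1N2s2V 0); normalize_words.
  + by apply: U_bimod_sub; apply: (U_bimod_u1u2u1 (-2) (-1) 0); normalize_words.
  + by apply: U_bimod_sub; apply: (U_bimod_u1u2u1 (-1) (-2) 1); normalize_words; rewrite conj21_N2.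
  + apply: U_bimod_sub; apply: (U_bimod_s2Vs1s2V (-1) 1); normalize_words.
    by rewrite (mulr4_lcongr (esym conj21_N2)) !mulrA shiftV12_1.
- by apply: U_bimod_sub; apply: (U_bimod_u1u2u1 0 i (-2)); normalize_words.
- move: i; apply: (s2_window_left (-2) (-1) 0 1 U_closed) => //.
  + have -> : s2 ^ (-2) * s1^-2 * s2 ^ 1 = 1 * (s2 ^ (-1) * s1 * s2 ^ (-2)) * s1^-1.
      by rewrite [in LHS]exprzN2 mul1r (mulr3_lcongr (esym (conj12 _))) !mulrA.
    by apply: U_bimod_sub; apply: U_bimod_mul2; [apply: u1_exprz 0 | apply: u1_exprz (-1) |
      apply: U_bimod_s2_s1_s2].
  + by apply: U_bimod_sub; apply: (U_bimod_u1u2u1 1 (-2) (-1)); normalize_words; rewrite conj12_N2.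
  + by apply: U_bimod_sub; apply: (U_bimod_u1u2u1 (-2) 1 0); normalize_words.
  + by apply: U_bimod_sub; apply: (U_bimod_s2s1N2s2 0 0); normalize_words.
Qed.

Lemma U_s2_s1_s2_exprz i j k : U (s2 ^ i * s1 ^ j * s2 ^ k).
Proof.
move: j; apply: (exprz_window de s1_unit s1_quartic (-2) (-1) 0 1 U_closed) => //.
- exact: U_s2_s1N2_s2.
- exact: U_s2_s1V_s2.
- apply: U_bimod_sub; apply: (U_bimod_u1u2u1 0 (i + k) 0).
  by rewrite exprzDr // !expr0z !mulr1 mul1r.
- by apply: U_bimod_sub; apply: U_bimod_s2_s1_s2.
Qed.

Lemma u2u1u2_sub_U w : u2u1u2 s1 s2 w -> U w.
Proof.
apply: (in_span_ind U U_closed) => _ [p [q [r [[f ->] [g ->] [h ->] ->]]]].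
rewrite -(mul1r (horner_alg s2 f)) -mulrA.
apply: (lincomb_closed_horner_alg U_closed) => i; rewrite mul1r mulrA.
apply: (lincomb_closed_horner_alg U_closed) => j; rewrite -[_ * horner_alg s2 h]mulr1.
apply: (lincomb_closed_horner_alg U_closed) => k; rewrite mulr1.
exact: U_s2_s1_s2_exprz i j k.
Qed.

End Proposition.

Theorem proposition3p2 (R : comNzRingType) (A : unitAlgType R)
    (a b c d : R) (s1 s2 : A) :
  (exists e : R, d * e = 1) ->
  s1 \is a GRing.unit -> s2 \is a GRing.unit ->
  s1 * s2 * s1 = s2 * s1 * s2 ->
  s1 ^+ 4 = a *: s1 ^+ 3 + b *: s1 ^+ 2 + c *: s1 + d%:A ->
  s2 ^+ 4 = a *: s2 ^+ 3 + b *: s2 ^+ 2 + c *: s2 + d%:A ->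
  forall w : A, u2u1u2 s1 s2 w -> U_mod s1 s2 w.
Proof.
move=> [e de] s1_unit s2_unit braid s1_quartic s2_quartic.
exact: u2u1u2_sub_U de s1_unit s2_unit braid s1_quartic s2_quartic.
Qed.
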